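(* Let $n\ge1$, $\theta\in\mathbb R$ and $\tilde g=[\tilde g_1^\top,\dots,\tilde g_n^\top]^\top\in\mathbb R^{3n}$. The following are equivalent: (a) $(\tilde g,\theta)$ is non-singular, i.e. the linear map $\mathcal F:\mathbb R^3\times\mathbb R^3\to\mathbb R^{3n}$, $\mathcal F(s,\tau)=A(\tilde g,\theta)[s^\top,\tau^\top]^\top$, is injective; (b) $\mathrm{rank}(A(\tilde g,\theta))=6$; (c) $\dim(\Pi(\tilde g,\theta))=6$; (d) each of the sets $\{\tilde p^x_{i,\theta}\}_{i=1}^n$, $\{\tilde p^y_{i,\theta}\}_{i=1}^n$, $\{\tilde\phi_i\}_{i=1}^n$ affinely spans $\mathbb R$.
   Context: $R(\theta)=\begin{bmatrix}\cos\theta&-\sin\theta\\ \sin\theta&\cos\theta\end{bmatrix}$, $\Theta=\begin{bmatrix}R(\theta)&0\\0&1\end{bmatrix}$. Each $\tilde g_i=[\tilde p_i^\top,\tilde\phi_i]^\top\in\mathbb R^3$, and $\tilde g_{i,\theta}:=\Theta^\top\tilde g_i=[\tilde p^x_{i,\theta},\tilde p^y_{i,\theta},\tilde\phi_i]^\top$. $A(\tilde g,\theta)\in\mathbb R^{3n\times6}$ is the matrix whose $i$-th block row is $[\Theta\,\mathrm{diag}(\tilde g_{i,\theta})\ \ I_3]$. The target state space is $\Pi(\tilde g,\theta)=\{g\in\mathbb R^{3n}: g_i=\tau+\Theta\,\mathrm{diag}(s)\,\Theta^\top\tilde g_i,\ i=1,\dots,n,\ s,\tau\in\mathbb R^3\}$,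 which equals the image of $A(\tilde g,\theta)$. A set $\{x_i\}$ of reals affinely spans $\mathbb R$ if $\{\sum a_ix_i:\sum a_i=1\}=\mathbb R$, equivalently it contains two distinct elements. *)

From HB Require Import structures.
From mathcomp Require Import all_boot all_order all_algebra.
From mathcomp Require Import reals trigo.
Set Implicit Arguments. Unset Strict Implicit. Unset Printing Implicit Defensive.
Import Order.TTheory GRing.Theory Num.Theory.
Local Open Scope ring_scope.

Section Defs.
Variable R : realType.

Definition Rot (th : R) : 'M[R]_2 :=
  \matrix_(i < 2, j < 2)
    (if (i == 0 :> nat) then (if (j == 0 :> nat) then cos th else - sin th)
     else (if (j == 0 :> nat) then sin th else cos th)).

Definition Theta (th : R) : 'M[R]_(2 + 1) := block_mx (Rot th) 0 0 1%:M.

Definition i0 : 'I_3 := @Ordinal 3 0 isT.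
Definition i1 : 'I_3 := @Ordinal 3 1 isT.
Definition i2 : 'I_3 := @Ordinal 3 2 isT.

Definition gtheta n (gt : 'I_n -> 'cV[R]_3) (th : R) (i : 'I_n) : 'cV[R]_3 :=
  (Theta th)^T *m gt i.

Definition Amat n (gt : 'I_n -> 'cV[R]_3) (th : R)
  : 'M[R]_(\sum_(i < n) 3, 3 + 3) :=
  \mxcol_(i < n) row_mx (Theta th *m diag_mx (gtheta gt th i)^T) (1%:M : 'M[R]_3).

Definition in_Pi n (gt : 'I_n -> 'cV[R]_3) (th : R)
  (g : 'cV[R]_(\sum_(i < n) 3)) : Prop :=
  exists s tau : 'cV[R]_3,
    g = \mxcol_(i < n) (tau + Theta th *m diag_mx s^T *m (Theta th)^T *m gt i).

Definition dim_Pi_eq n (gt : 'I_n -> 'cV[R]_3) (th : R) (d : nat) : Prop :=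
  exists V : {vspace 'cV[R]_(\sum_(i < n) 3)},
    (forall g, g \in V <-> in_Pi gt th g) /\ \dim V = d.

Definition affinely_spans n (x : 'I_n -> R) : Prop :=
  forall y : R, exists a : 'I_n -> R,
    \sum_(i < n) a i = 1 /\ \sum_(i < n) a i * x i = y.

Definition nonsingular n (gt : 'I_n -> 'cV[R]_3) (th : R) : Prop :=
  injective (fun st : 'cV[R]_3 * 'cV[R]_3 => Amat gt th *m col_mx st.1 st.2).

End Defs.

From HB Require Import structures.
From mathcomp Require Import all_boot all_order all_algebra.
From mathcomp Require Import reals trigo.
From mathcomp Require Import ring lra zify.
Set Implicit Arguments. Unset Strict Implicit. Unset Printing Implicit Defensive.
Import Order.TTheory GRing.Theory Num.Theory.
Local Open Scope ring_scope.

(* Write sigma := Theta^T tau.  The i-th block of A(g, theta) [s; tau] is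
   Theta (diag(g_{i,theta}) s + sigma), and Theta is orthogonal, so [s; tau]
   lies in the kernel of A iff g_{i,theta,k} s_k + sigma_k = 0 for all i, k.
   For a fixed coordinate k this system in (s_k, sigma_k) has only the trivial
   solution iff the values g_{i,theta,k} are not all equal, which is also the
   condition for them to affinely span R.  Non-singularity, rank 6 and
   dim Pi = 6 all say that the kernel of A is trivial (the last one by
   rank-nullity, Pi being the image of A).  Finally the third coordinate of
   g_{i,theta} is phi_i, as Theta fixes the last axis. *)

Lemma constant_or_separated {T : eqType} {m : nat} (t : T) (x : 'I_m -> T) :
  (exists c, forall i, x i = c) \/ exists j l, x j != x l.
Proof.
case: m x => [|m] x; first by left; exists t => -[].
case: (pickP (fun j => x j != x ord0)) => [j neq_j0 | eq_x0].
  by right; exists j, ord0.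
by left; exists (x ord0) => i; apply/eqP/negbFE/eq_x0.
Qed.

Lemma sum_delta_mull (R : pzSemiRingType) m (k : 'I_m) (F : 'I_m -> R) :
  \sum_i (i == k)%:R * F i = F k.
Proof.
rewrite (bigD1 k) //= eqxx mul1r big1 ?addr0 // => i /negbTE->.
by rewrite mul0r.
Qed.

Lemma diag_mx_trC (R : comPzRingType) k (u v : 'cV[R]_k) :
  diag_mx u^T *m v = diag_mx v^T *m u.
Proof. by apply/matrixP => i j; rewrite !mul_diag_mx !mxE (ord1 j) mulrC. Qed.

Lemma mulmx_injP (F : fieldType) m k (M : 'M[F]_(m, k)) :
  injective (mulmx M : 'cV_k -> 'cV_m) <-> \rank M = k.
Proof.
rewrite -mxrank_tr; split => [injM | rankM u v].
  apply/eqP/inj_row_free => v vM0; apply: trmx_inj; apply: injM.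
  by rewrite -[M]trmxK -trmx_mul vM0 !trmx0 mulmx0.
have freeM : row_free M^T by rewrite /row_free rankM.
by move/(congr1 trmx); rewrite !trmx_mul => /(row_free_inj freeM)/trmx_inj.
Qed.

Lemma dim_limg_injP (F : fieldType) (U V : vectType F) (f : 'Hom(U, V)) :
  \dim (limg f) = \dim {:U} <-> injective f.
Proof.
have := limg_ker_dim f fullv; rewrite capfv => ker_dim.
split => [dim_f | /lker0P/eqP ker0]; last by rewrite -ker_dim ker0 dimv0.
by apply/lker0P; rewrite -dimv_eq0; apply/eqP; lia.
Qed.

Lemma affine_system_trivialP (F : fieldType) m (x : 'I_m -> F) :
  (forall a b : F, (forall i, x i * a + b = 0) -> a = 0 /\ b = 0) <->
  exists j l, x j != x l.
Proof.
split => [trivial_sol | [j [l neq_jl]] a b sol].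
  have [[c const_x] | //] := constant_or_separated 0 x.
  have [i | /eqP] := trivial_sol 1 (- c); first by rewrite const_x mulr1 subrr.
  by rewrite oner_eq0.
have a0 : a = 0.
  have : (x j - x l) * a = (x j * a + b) - (x l * a + b) by ring.
  by rewrite !sol subrr => /eqP; rewrite mulf_eq0 subr_eq0 (negbTE neq_jl) => /eqP.
by split => //; have := sol j; rewrite a0 mulr0 add0r.
Qed.

Lemma affinely_spansP (R : realType) m (x : 'I_m -> R) :
  affinely_spans x <-> exists j l, x j != x l.
Proof.
split => [spans | [j [l neq_jl]] y].
  have [[c const_x] | //] := constant_or_separated 0 x.
  have [a [sum_a sum_ax]] := spans (c + 1).
  suff : \sum_i a i * x i = c.
    by rewrite sum_ax => /eqP; rewrite -subr_eq0 addrAC subrr add0r oner_eq0.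
  by under eq_bigr do rewrite const_x; rewrite -mulr_suml sum_a mul1r.
have [t scale_t] : exists t, t * (x j - x l) = y - x l.
  by exists ((y - x l) / (x j - x l)); rewrite divfK // subr_eq0.
exists (fun i => (i == j)%:R * t + (i == l)%:R * (1 - t)); split.
  by rewrite big_split /= !sum_delta_mull addrC subrK.
under eq_bigr do rewrite mulrDl -!mulrA.
rewrite big_split /= !sum_delta_mull.
by rewrite -[y](subrK (x l)) -scale_t; ring.
Qed.

Section Rotation.
Variables (R : realType) (th : R).

Lemma mul_trRot : (Rot th)^T *m Rot th = 1%:M.
Proof.
have cos2_sin2 := cos2Dsin2 th.
apply/matrixP => i j; rewrite !mxE !big_ord_recl big_ord0 !mxE /=.
by case: i => [[|[|?]] ?] //=; case: j => [[|[|?]] ?] //=; rewrite ?mulr1n ?mulr0n; nra.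
Qed.

Lemma mul_trTheta : (Theta th)^T *m Theta th = 1%:M.
Proof.
rewrite /Theta tr_block_mx !trmx0 trmx1 mulmx_block mul_trRot.
by rewrite !mulmx0 !mul0mx !addr0 !add0r mulmx1 -scalar_mx_block.
Qed.

Lemma mul_Theta_tr : Theta th *m (Theta th)^T = 1%:M.
Proof. exact: mulmx1C mul_trTheta. Qed.

Lemma trTheta_mul_i2 (v : 'cV[R]_3) : ((Theta th)^T *m v) i2 0 = v i2 0.
Proof.
rewrite /Theta tr_block_mx !trmx0 trmx1 -[v](@vsubmxK _ 2 1).
rewrite mul_block_col !mul0mx mul1mx addr0 add0r.
have -> : i2 = rshift 2 (0 : 'I_1) by apply: val_inj.
by rewrite !(@col_mxEd _ 2 1 1).
Qed.

End Rotation.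

Lemma forall_ord3 (P : 'I_3 -> Prop) : (forall k, P k) <-> [/\ P i0, P i1 & P i2].
Proof.
split => [P_all | [P0 P1 P2] [[|[|[|//]]] lt_k3]]; first by split.
- by have -> : Ordinal lt_k3 = i0 by apply: val_inj.
- by have -> : Ordinal lt_k3 = i1 by apply: val_inj.
- by have -> : Ordinal lt_k3 = i2 by apply: val_inj.
Qed.

Section TargetMatrix.
Variables (R : realType) (n : nat) (gt : 'I_n -> 'cV[R]_3) (th : R).
Local Notation A := (Amat gt th).
Local Notation T := (Theta th).

Lemma Amat_mul_col_mx (s tau : 'cV[R]_3) :
  A *m col_mx s tau = \mxcol_i (T *m diag_mx (gtheta gt th i)^T *m s + tau).
Proof. by rewrite /Amat mxcol_mul; apply: eq_mxcol => i; rewrite mul_row_col mul1mx. Qed.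

Lemma Amat_kernelP (s sigma : 'cV[R]_3) :
  A *m col_mx s (T *m sigma) = 0 <->
  forall i k, gtheta gt th i k 0 * s k 0 + sigma k 0 = 0.
Proof.
rewrite Amat_mul_col_mx -(@mxcol0 _ n (fun=> 3%N) 1) -eq_mxcolP.
have blockE i : T *m diag_mx (gtheta gt th i)^T *m s + T *m sigma =
                T *m (diag_mx (gtheta gt th i)^T *m s + sigma).
  by rewrite mulmxDr mulmxA.
have entryE i k : (diag_mx (gtheta gt th i)^T *m s + sigma) k 0 =
                  gtheta gt th i k 0 * s k 0 + sigma k 0.
  by rewrite mxE mul_diag_mx !mxE.
split => [ker_s i k | ker_s i].
  move: (ker_s i); rewrite blockE => /(congr1 (mulmx T^T)).
  rewrite mulmxA mul_trTheta mul1mx mulmx0.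
  by move/matrixP/(_ k 0); rewrite entryE => ->; rewrite mxE.
rewrite /= blockE.
suff -> : diag_mx (gtheta gt th i)^T *m s + sigma = 0 by rewrite mulmx0.
by apply/matrixP => k j; rewrite (ord1 j) entryE ker_s mxE.
Qed.

Lemma Amat_injP : injective (mulmx A : 'cV_(3 + 3) -> _) <->
  forall k, exists j l, gtheta gt th j k 0 != gtheta gt th l k 0.
Proof.
split => [injA k | separated].
  apply/affine_system_trivialP => a b sol.
  pose s : 'cV[R]_3 := \col_k' (a *+ (k' == k)).
  pose sigma : 'cV[R]_3 := \col_k' (b *+ (k' == k)).
  have sE k' : s k' 0 = a *+ (k' == k) by rewrite mxE.
  have sigmaE k' : sigma k' 0 = b *+ (k' == k) by rewrite mxE.
  have ker_s : A *m col_mx s (T *m sigma) = A *m 0.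
    rewrite mulmx0; apply/Amat_kernelP => i k'; rewrite sE sigmaE.
    by case: eqVneq => [-> | _] /=; rewrite ?mulr1n ?mulr0n ?mulr0 ?addr0 ?sol.
  move/injA: ker_s; rewrite -col_mx0 => /eq_col_mx[s0 sigma0].
  have {}sigma0 : sigma = 0.
    by rewrite -[sigma]mul1mx -(mul_trTheta th) -mulmxA sigma0 mulmx0.
  move/matrixP/(_ k 0): s0; move/matrixP/(_ k 0): sigma0.
  by rewrite sE sigmaE !mxE eqxx /= !mulr1n => -> ->.
apply: raddf_inj => u; rewrite -[u]vsubmxK -[dsubmx u]mul1mx -(mul_Theta_tr th) -mulmxA.
set s := usubmx u; set sigma := T^T *m dsubmx u => /Amat_kernelP ker_s.
have coord0 k : s k 0 = 0 /\ sigma k 0 = 0.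
  have trivial_sol := (affine_system_trivialP (fun i => gtheta gt th i k 0)).2.
  exact: trivial_sol (separated k) _ _ (ker_s^~ k).
have s0 : s = 0 by apply/matrixP => k j; rewrite (ord1 j) [RHS]mxE; case: (coord0 k).
have sigma0 : sigma = 0 by apply/matrixP => k j; rewrite (ord1 j) [RHS]mxE; case: (coord0 k).
by rewrite s0 sigma0 mulmx0 col_mx0.
Qed.

Lemma nonsingular_injP : nonsingular gt th <-> injective (mulmx A : 'cV_(3 + 3) -> _).
Proof.
split => [inj_st u v | injA [s tau] [s' tau'] /= /injA /eq_col_mx [-> ->] //].
rewrite -[u]vsubmxK -[v]vsubmxK => /(inj_st (_, _) (_, _)).
by case=> -> ->.
Qed.

Lemma in_Pi_limgP g : in_Pi gt th g <-> g \in limg (linfun (mulmx A : 'cV_(3 + 3) -> _)).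
Proof.
have PiE s tau : \mxcol_i (tau + T *m diag_mx s^T *m T^T *m gt i) = A *m col_mx s tau.
  by rewrite Amat_mul_col_mx; apply: eq_mxcol => i; rewrite addrC -!mulmxA diag_mx_trC.
split => [[s [tau ->]] | /memv_imgP[u _ ->]].
  by rewrite PiE; apply/memv_imgP; exists (col_mx s tau); rewrite ?memvf ?lfunE.
by exists (usubmx u), (dsubmx u); rewrite PiE vsubmxK lfunE.
Qed.

Lemma dim_Pi_injP : dim_Pi_eq gt th 6 <-> injective (mulmx A : 'cV_(3 + 3) -> _).
Proof.
set f := linfun (mulmx A : 'cV_(3 + 3) -> _).
have inj_fE : injective f <-> injective (mulmx A : 'cV_(3 + 3) -> _).
  split => inj u v; last by rewrite !lfunE => /inj.
  by move=> Auv; apply: inj; rewrite !lfunE.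
rewrite -inj_fE -dim_limg_injP dimvf dim_matrix.
split => [[V [memV dimV]] | dim_f]; last by exists (limg f); split => // g; rewrite in_Pi_limgP.
suff -> : limg f = V by rewrite dimV.
by apply/vspaceP => g; apply/idP/idP => [/in_Pi_limgP/memV | /memV/in_Pi_limgP].
Qed.

Lemma affine_conditions_injP :
  [/\ affinely_spans (fun i => gtheta gt th i i0 0),
      affinely_spans (fun i => gtheta gt th i i1 0)
    & affinely_spans (fun i => gt i i2 0)] <->
  injective (mulmx A : 'cV_(3 + 3) -> _).
Proof.
have separated_i2 : (exists j l, gtheta gt th j i2 0 != gtheta gt th l i2 0) <->
                    exists j l, gt j i2 0 != gt l i2 0.
  by split=> -[j [l neq_jl]]; exists j, l; rewrite /gtheta ?trTheta_mul_i2 in neq_jl *.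
rewrite Amat_injP forall_ord3.
split=> [[/affinely_spansP sep0 /affinely_spansP sep1 /affinely_spansP/separated_i2 sep2]
        | [sep0 sep1 /separated_i2 sep2]].
  by split.
by split; apply/affinely_spansP.
Qed.
End TargetMatrix.

Theorem lemma3 (R : realType) (n : nat) (hn : (1 <= n)%N) (th : R)
  (gt : 'I_n -> 'cV[R]_3) :
  [<-> nonsingular gt th;
       \rank (Amat gt th) = 6%N;
       dim_Pi_eq gt th 6;
       [/\ affinely_spans (fun i => gtheta gt th i i0 0),
           affinely_spans (fun i => gtheta gt th i i1 0)
         & affinely_spans (fun i => gt i i2 0)]].
Proof.
have rank_injP : injective (mulmx (Amat gt th) : 'cV_(3 + 3) -> _) <->
                 \rank (Amat gt th) = 6%N.
  exact: mulmx_injP.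
tfae.
- by move/nonsingular_injP/rank_injP.
- by move/rank_injP/dim_Pi_injP.
- by move/dim_Pi_injP/affine_conditions_injP.
- by move/affine_conditions_injP/nonsingular_injP.
Qed.
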